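(* Let the functions satisfy the $M=2$ system and the boundary conditions (B) (see context), and assume $\eta_0'(s)\neq0$ for $s>0$. Define $F:=-3x_0y_1-3x_1y_2-e_1x_0y_2$. Then $$F^2=4e_1^2(\eta_0')^2-12e_2(\eta_0')^2+12\eta_0(\eta_0')^2-36s(\eta_0')^3+9s^2(\eta_0'')^2-12s\eta_0'\big(\eta_0''+s\eta_0'''\big).$$
   Context: Fix complex parameters $\nu_0,\nu_1,\nu_2$ with $\nu_2-\nu_1\notin\mathbb Z$, and let $e_1=\nu_0+\nu_1+\nu_2$, $e_2=\nu_0\nu_1+\nu_0\nu_2+\nu_1\nu_2$, $e_3=\nu_0\nu_1\nu_2$. The $M=2$ system is the following system for smooth complex-valued functions $x_0,x_1,x_2,y_0,y_1,y_2,\xi_0,\xi_1,\xi_2,\eta_0,\eta_1,\eta_2$ of $s\in(0,\infty)$, with $'=d/ds$: $sx_0'=-\eta_0x_0-x_1$, $sx_1'=-\eta_1x_0-x_2$, $sx_2'=-\eta_2x_0-sx_0+\xi_0x_0+\xi_1x_1+\xi_2x_2$, $sy_2'=-\xi_2y_2+y_1$, $sy_1'=-\xi_1y_2+y_0$, $sy_0'=-\xi_0y_2+sy_2+\eta_0y_0+\eta_1y_1+\eta_2y_2$, $\xi_0'=-x_0y_0$, $\xi_1'=-x_0y_1$, $\xi_2'=-x_0y_2$, $\eta_0'=-x_0y_2$, $\eta_1'=-x_1y_2$, $\eta_2'=-x_2y_2$. Boundary conditions (B): as $s\to0^+$, $\eta_0,\eta_1,\eta_2\to0$, $\xi_0\to-e_3$,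 $\xi_1\to e_2$, $\xi_2\to-e_1$, and $x_j(s)y_k(s)\to0$, $s\,x_j(s)y_k(s)\to0$ for all $j,k\in\{0,1,2\}$. *)

From Stdlib Require Import Reals Lra List.
Open Scope R_scope.

Definition CC : Type := (R * R)%type.
Definition RtoC (r : R) : CC := (r, 0).
Definition Cadd (a b : CC) : CC := (fst a + fst b, snd a + snd b).
Definition Copp (a : CC) : CC := (- fst a, - snd a).
Definition Csub (a b : CC) : CC := Cadd a (Copp b).
Definition Cmul (a b : CC) : CC :=
  (fst a * fst b - snd a * snd b, fst a * snd b + snd a * fst b).

Declare Scope C_scope.
Delimit Scope C_scope with CC.
Notation "a + b" := (Cadd a b) : C_scope.
Notation "a - b" := (Csub a b) : C_scope.
Notation "- a" := (Copp a) : C_scope.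
Notation "a * b" := (Cmul a b) : C_scope.

Definition Cderiv (f : R -> CC) (s : R) (d : CC) : Prop :=
  derivable_pt_lim (fun t => fst (f t)) s (fst d) /\
  derivable_pt_lim (fun t => snd (f t)) s (snd d).

Definition Clim0 (f : R -> CC) (L : CC) : Prop :=
  forall eps : R, 0 < eps -> exists delta : R, 0 < delta /\
    forall s : R, 0 < s < delta ->
      Rabs (fst (f s) - fst L) < eps /\ Rabs (snd (f s) - snd L) < eps.

(* Three quantities are first integrals of the M = 2 system: x0 y0 + x1 y1 + x2 y2,
   eta0 - xi2, and eta0 - eta1 + xi1 - xi2 eta0 + s x0 y2 all have zero derivative
   on (0, oo), and the boundary conditions (B) identify their values as 0, e1 and
   e2.  By the system, s eta0'' and s (eta0'' + s eta0''') are polynomials in the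
   unknowns, and the claimed formula for F^2 becomes a polynomial identity modulo
   x0 y0 + x1 y1 + x2 y2 = 0. *)

From Stdlib Require Import Reals List Lra ZArith.
From Coquelicot Require Derive.
Open Scope R_scope.

Definition Cinv (a : CC) : CC :=
  let n := fst a * fst a + snd a * snd a in (fst a / n, - snd a / n).
Definition Cdiv (a b : CC) : CC := Cmul a (Cinv b).
Notation "a / b" := (Cdiv a b) : C_scope.

Lemma CC_field :
  field_theory (RtoC 0) (RtoC 1) Cadd Cmul Csub Copp Cdiv Cinv (@eq CC).
Proof.
  constructor.
  - constructor; intros;
      repeat match goal with a : CC |- _ => destruct a end;
      unfold Csub, RtoC, Cadd, Cmul, Copp; simpl; f_equal; ring.
  - intros H; injection H; lra.
  - reflexivity.
  - intros [a b] Hab; unfold Cinv, Cmul, RtoC; simpl.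
    assert (Hn : a * a + b * b <> 0).
    { intros Hn; apply Hab.
      assert (a = 0) by nra; assert (b = 0) by nra; subst; reflexivity. }
    f_equal; field; exact Hn.
Qed.

Lemma RtoC_IZR_morph :
  ring_morph (RtoC 0) (RtoC 1) Cadd Cmul Csub Copp (@eq CC)
    0%Z 1%Z Z.add Z.mul Z.sub Z.opp Z.eqb (fun z => RtoC (IZR z)).
Proof.
  constructor; [reflexivity | reflexivity | ..]; intros *;
    [ | | | | intros ->%Z.eqb_eq; reflexivity];
    unfold Csub, RtoC, Cadd, Cmul, Copp; simpl; f_equal;
    rewrite ?plus_IZR, ?mult_IZR, ?minus_IZR, ?opp_IZR; ring.
Qed.

Ltac CC_numeral t :=
  match t with
  | RtoC (IZR ?z) => match isZcst z with true => z | _ => constr:(NotConstant) end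
  | _ => constr:(NotConstant)
  end.

(* With integer coefficients read off [RtoC (IZR z)], [ring] and [field] treat
   the numerals [RtoC 3], [RtoC 12], ... of the statement as numbers. *)
Add Field CC_field : CC_field (morphism RtoC_IZR_morph, constants [CC_numeral]).

Lemma RtoC_neq0 t : t <> 0 -> RtoC t <> RtoC 0.
Proof. intros Ht H; injection H; exact Ht. Qed.

Lemma Cmul_eq_div (a x b : CC) : a <> RtoC 0 -> (a * x = b)%CC -> x = (b / a)%CC.
Proof. intros Ha <-; field; exact Ha. Qed.

Lemma eq_of_sub_eq_mul_zero (a b c t : CC) :
  t = RtoC 0 -> (a - b = c * t)%CC -> a = b.
Proof.
  intros Ht Hab.
  transitivity (b + (a - b))%CC; [ring|].
  rewrite Hab, Ht; ring.
Qed.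

Lemma Cderiv_eq f s d d' : Cderiv f s d -> d = d' -> Cderiv f s d'.
Proof. intros H ->; exact H. Qed.

Lemma Cderiv_RtoC s : Cderiv RtoC s (RtoC 1).
Proof. split; [apply derivable_pt_lim_id | apply derivable_pt_lim_const]. Qed.

Lemma Cderiv_add f g s df dg : Cderiv f s df -> Cderiv g s dg ->
  Cderiv (fun t => f t + g t)%CC s (df + dg)%CC.
Proof. intros [H1 H2] [H3 H4]; split; apply derivable_pt_lim_plus; assumption. Qed.

Lemma Cderiv_opp f s df : Cderiv f s df -> Cderiv (fun t => - f t)%CC s (- df)%CC.
Proof. intros [H1 H2]; split; apply derivable_pt_lim_opp; assumption. Qed.

Lemma Cderiv_sub f g s df dg : Cderiv f s df -> Cderiv g s dg ->
  Cderiv (fun t => f t - g t)%CC s (df - dg)%CC.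
Proof. intros H1 H2; apply Cderiv_add; [|apply Cderiv_opp]; assumption. Qed.

Lemma Cderiv_mul f g s df dg : Cderiv f s df -> Cderiv g s dg ->
  Cderiv (fun t => f t * g t)%CC s (df * g s + f s * dg)%CC.
Proof.
  intros [H1 H2] [H3 H4]; split; simpl.
  - replace (_ + _) with (fst df * fst (g s) + fst (f s) * fst dg
      - (snd df * snd (g s) + snd (f s) * snd dg)) by ring.
    apply derivable_pt_lim_minus; apply derivable_pt_lim_mult; assumption.
  - replace (_ + _) with (fst df * snd (g s) + fst (f s) * snd dg
      + (snd df * fst (g s) + snd (f s) * fst dg)) by ring.
    apply derivable_pt_lim_plus; apply derivable_pt_lim_mult; assumption.
Qed.

Ltac Cderiv_rules :=
  repeat first [ eassumption | apply Cderiv_RtoC | eapply Cderiv_sub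
               | eapply Cderiv_add | eapply Cderiv_opp | eapply Cderiv_mul ].

Lemma Cderiv_unique f s d1 d2 : Cderiv f s d1 -> Cderiv f s d2 -> d1 = d2.
Proof.
  intros [H1 H2] [H3 H4]; destruct d1, d2; simpl in *.
  f_equal; eapply uniqueness_limite; eassumption.
Qed.

Lemma derivable_pt_lim_ext_pos f g s l : 0 < s ->
  (forall t, 0 < t -> f t = g t) ->
  derivable_pt_lim f s l -> derivable_pt_lim g s l.
Proof.
  intros Hs Hfg H eps Heps.
  destruct (H eps Heps) as [d Hd].
  assert (Hm : 0 < Rmin d s) by (apply Rmin_pos; [apply cond_pos | lra]).
  exists (mkposreal _ Hm); intros h Hh Hhd; simpl in Hhd.
  pose proof (Rmin_l d s); pose proof (Rmin_r d s).
  destruct (Rabs_def2 h (Rmin d s) Hhd).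
  rewrite <- (Hfg s Hs), <- (Hfg (s + h)) by lra.
  apply Hd; [exact Hh | lra].
Qed.

Lemma Cderiv_ext_pos f g s d : 0 < s -> (forall t, 0 < t -> f t = g t) ->
  Cderiv f s d -> Cderiv g s d.
Proof.
  intros Hs Hfg [H1 H2]; split.
  - apply (derivable_pt_lim_ext_pos (fun t => fst (f t))); [exact Hs | | exact H1].
    intros t Ht; rewrite Hfg by exact Ht; reflexivity.
  - apply (derivable_pt_lim_ext_pos (fun t => snd (f t))); [exact Hs | | exact H2].
    intros t Ht; rewrite Hfg by exact Ht; reflexivity.
Qed.

Lemma Clim0_limit1_in f L : Clim0 f L <->
  limit1_in (fun t => fst (f t)) (fun t => 0 < t) (fst L) 0 /\
  limit1_in (fun t => snd (f t)) (fun t => 0 < t) (snd L) 0.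
Proof.
  unfold limit1_in, limit_in; simpl; unfold R_dist; split.
  - intros H; split; intros eps He; destruct (H eps He) as [d [Hd H']];
      exists d; split; auto; intros x [Hx Hxd];
      rewrite Rminus_0_r, Rabs_pos_eq in Hxd by lra; apply H'; lra.
  - intros [H1 H2] eps He.
    destruct (H1 eps He) as [d1 [Hd1 H1']], (H2 eps He) as [d2 [Hd2 H2']].
    exists (Rmin d1 d2); split; [apply Rmin_pos; lra|].
    intros s Hs; pose proof (Rmin_l d1 d2); pose proof (Rmin_r d1 d2).
    split; [apply H1' | apply H2']; rewrite Rminus_0_r, Rabs_pos_eq; lra.
Qed.

Lemma Clim0_add f g a b : Clim0 f a -> Clim0 g b ->
  Clim0 (fun t => f t + g t)%CC (a + b)%CC.
Proof.
  rewrite !Clim0_limit1_in; intros [H1 H2] [H3 H4]; split; apply limit_plus; assumption.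
Qed.

Lemma Clim0_sub f g a b : Clim0 f a -> Clim0 g b ->
  Clim0 (fun t => f t - g t)%CC (a - b)%CC.
Proof.
  rewrite !Clim0_limit1_in; intros [H1 H2] [H3 H4];
    split; apply limit_plus; try apply limit_Ropp; assumption.
Qed.

Lemma Clim0_mul f g a b : Clim0 f a -> Clim0 g b ->
  Clim0 (fun t => f t * g t)%CC (a * b)%CC.
Proof.
  rewrite !Clim0_limit1_in; intros [H1 H2] [H3 H4]; simpl; split.
  - apply limit_minus; apply limit_mul; assumption.
  - apply limit_plus; apply limit_mul; assumption.
Qed.

Lemma derivable_pt_lim_0_eq_pos (f : R -> R) a b :
  (forall t, 0 < t -> derivable_pt_lim f t 0) -> 0 < a -> a <= b -> f a = f b.
Proof.
  intros Hd Ha Hab.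
  destruct (Derive.MVT_gen f a b (fun _ => 0)) as [c [_ Hc]].
  - intros x Hx; rewrite Rmin_left in Hx by lra.
    apply Derive.is_derive_Reals, Hd; lra.
  - intros x Hx; rewrite Rmin_left in Hx by lra.
    apply derivable_continuous_pt; exists 0; apply Hd; lra.
  - lra.
Qed.

Lemma eq_lim0_of_derivable_pt_lim_0 (f : R -> R) L :
  (forall t, 0 < t -> derivable_pt_lim f t 0) ->
  (forall eps, 0 < eps -> exists delta, 0 < delta /\
     forall t, 0 < t < delta -> Rabs (f t - L) < eps) ->
  forall s, 0 < s -> f s = L.
Proof.
  intros Hd Hl s Hs.
  destruct (Req_dec (f s) L) as [E|E]; [exact E | exfalso].
  destruct (Hl (Rabs (f s - L))) as [d [Hd0 Hdd]]; [apply Rabs_pos_lt; lra|].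
  pose (t := Rmin s d / 2).
  pose proof (Rmin_l s d); pose proof (Rmin_r s d); pose proof (Rmin_pos s d Hs Hd0).
  pose proof (Hdd t ltac:(unfold t; lra)) as Ht.
  rewrite (derivable_pt_lim_0_eq_pos f t s Hd) in Ht by (unfold t; lra).
  lra.
Qed.

Lemma eq_Clim0_of_Cderiv_0 f L :
  (forall t, 0 < t -> Cderiv f t (RtoC 0)) -> Clim0 f L ->
  forall s, 0 < s -> f s = L.
Proof.
  intros Hd Hl s Hs; destruct L as [l1 l2].
  rewrite (surjective_pairing (f s)); f_equal.
  - apply (eq_lim0_of_derivable_pt_lim_0 (fun t => fst (f t))); [apply Hd | | exact Hs].
    intros eps He; destruct (Hl eps He) as [d [Hd0 H]].
    exists d; split; [exact Hd0 | intros t Ht; apply (H t Ht)].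
  - apply (eq_lim0_of_derivable_pt_lim_0 (fun t => snd (f t))); [apply Hd | | exact Hs].
    intros eps He; destruct (Hl eps He) as [d [Hd0 H]].
    exists d; split; [exact Hd0 | intros t Ht; apply (H t Ht)].
Qed.

Local Open Scope C_scope.

Lemma F_squared_identity (S X0 X1 X2 Y0 Y1 Y2 Xi1 Xi2 Eta0 Eta1 e1 e2 p q r : CC) :
  X0 * Y0 + X1 * Y1 + X2 * Y2 = RtoC 0 ->
  Eta0 - Xi2 = e1 ->
  Eta0 - Eta1 + Xi1 - Xi2 * Eta0 + S * X0 * Y2 = e2 ->
  p = - (X0 * Y2) ->
  S * q = (Eta0 * X0 + X1) * Y2 + X0 * (Xi2 * Y2 - Y1) ->
  S * (q + S * r) =
    RtoC 2 * (Eta0 * X0 + X1) * (Y1 - Xi2 * Y2)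
    - (Eta0 * (Eta0 * X0 + X1) + Eta1 * X0 + X2) * Y2
    + X0 * (Xi2 * (Y1 - Xi2 * Y2) + Xi1 * Y2 - Y0)
    - RtoC 2 * S * (X0 * Y2) * (X0 * Y2) ->
  (- (RtoC 3 * X0 * Y1) - RtoC 3 * X1 * Y2 - e1 * X0 * Y2) *
  (- (RtoC 3 * X0 * Y1) - RtoC 3 * X1 * Y2 - e1 * X0 * Y2) =
    RtoC 4 * e1 * e1 * p * p - RtoC 12 * e2 * p * p
    + RtoC 12 * Eta0 * p * p - RtoC 36 * S * p * p * p
    + RtoC 9 * S * S * q * q
    - RtoC 12 * S * p * (q + S * r).
Proof.
  intros HT <- <- -> Hq Hr.
  replace (_ - RtoC 12 * S * _ * (q + S * r)) with
    (RtoC 4 * (Eta0 - Xi2) * (Eta0 - Xi2) * (X0 * Y2) * (X0 * Y2)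
     - RtoC 12 * (Eta0 - Eta1 + Xi1 - Xi2 * Eta0 + S * X0 * Y2) * (X0 * Y2) * (X0 * Y2)
     + RtoC 12 * Eta0 * (X0 * Y2) * (X0 * Y2) + RtoC 36 * S * (X0 * Y2) * (X0 * Y2) * (X0 * Y2)
     + RtoC 9 * (S * q) * (S * q) + RtoC 12 * (X0 * Y2) * (S * (q + S * r))) by ring.
  rewrite Hq, Hr.
  (* The two sides differ by [12 X0 Y2 (X0 Y0 + X1 Y1 + X2 Y2)]. *)
  apply (eq_of_sub_eq_mul_zero _ _ (RtoC 12 * X0 * Y2) _ HT); ring.
Qed.

Section M2_system.

Variables (nu0 nu1 nu2 : CC).
Variables (x0 x1 x2 y0 y1 y2 xi0 xi1 xi2 eta0 eta1 eta2 : R -> CC).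
Variables (dx0 dx1 dx2 dy0 dy1 dy2 dxi0 dxi1 dxi2 deta0 deta1 deta2 : R -> CC).
Variables (d2eta0 d3eta0 : R -> CC).

Hypothesis Hder : forall s, 0 < s ->
     Cderiv x0 s (dx0 s) /\ Cderiv x1 s (dx1 s) /\ Cderiv x2 s (dx2 s) /\
     Cderiv y0 s (dy0 s) /\ Cderiv y1 s (dy1 s) /\ Cderiv y2 s (dy2 s) /\
     Cderiv xi0 s (dxi0 s) /\ Cderiv xi1 s (dxi1 s) /\ Cderiv xi2 s (dxi2 s) /\
     Cderiv eta0 s (deta0 s) /\ Cderiv eta1 s (deta1 s) /\ Cderiv eta2 s (deta2 s) /\
     Cderiv deta0 s (d2eta0 s) /\ Cderiv d2eta0 s (d3eta0 s).

Hypothesis Hsys : forall s, 0 < s ->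
     (RtoC s * dx0 s = - (eta0 s * x0 s) - x1 s)%CC /\
     (RtoC s * dx1 s = - (eta1 s * x0 s) - x2 s)%CC /\
     (RtoC s * dx2 s = - (eta2 s * x0 s) - RtoC s * x0 s
                       + xi0 s * x0 s + xi1 s * x1 s + xi2 s * x2 s)%CC /\
     (RtoC s * dy2 s = - (xi2 s * y2 s) + y1 s)%CC /\
     (RtoC s * dy1 s = - (xi1 s * y2 s) + y0 s)%CC /\
     (RtoC s * dy0 s = - (xi0 s * y2 s) + RtoC s * y2 s
                       + eta0 s * y0 s + eta1 s * y1 s + eta2 s * y2 s)%CC /\
     (dxi0 s = - (x0 s * y0 s))%CC /\
     (dxi1 s = - (x0 s * y1 s))%CC /\
     (dxi2 s = - (x0 s * y2 s))%CC /\
     (deta0 s = - (x0 s * y2 s))%CC /\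
     (deta1 s = - (x1 s * y2 s))%CC /\
     (deta2 s = - (x2 s * y2 s))%CC.

Hypothesis HB_eta : Clim0 eta0 (RtoC 0) /\ Clim0 eta1 (RtoC 0) /\ Clim0 eta2 (RtoC 0).
Hypothesis HB_xi : Clim0 xi0 (- (nu0 * nu1 * nu2))%CC /\
           Clim0 xi1 (nu0 * nu1 + nu0 * nu2 + nu1 * nu2)%CC /\
           Clim0 xi2 (- (nu0 + nu1 + nu2))%CC.
Hypothesis HB_xy : forall u v : R -> CC, In u (x0 :: x1 :: x2 :: nil) ->
     In v (y0 :: y1 :: y2 :: nil) ->
     Clim0 (fun s => u s * v s)%CC (RtoC 0) /\
     Clim0 (fun s => RtoC s * u s * v s)%CC (RtoC 0).

Local Ltac unfold_system t Ht :=
  destruct (Hder t Ht) as (Dx0 & Dx1 & Dx2 & Dy0 & Dy1 & Dy2 & Dxi0 & Dxi1 & Dxi2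
                           & Deta0 & Deta1 & Deta2 & D2eta0 & D3eta0);
  destruct (Hsys t Ht) as (Ex0 & Ex1 & Ex2 & Ey2 & Ey1 & Ey0
                           & Exi0 & Exi1 & Exi2 & Eeta0 & Eeta1 & Eeta2).

Local Ltac field_system t :=
  let Hnz := fresh "Hnz" in
  assert (Hnz : RtoC t <> RtoC 0) by (apply RtoC_neq0; lra);
  repeat match goal with
  | H : (RtoC t * _ = _)%CC |- _ => apply Cmul_eq_div in H; [rewrite H; clear H | exact Hnz]
  end;
  field; exact Hnz.

Lemma x_dot_y_eq0 : forall t, 0 < t -> x0 t * y0 t + x1 t * y1 t + x2 t * y2 t = RtoC 0.
Proof.
  apply eq_Clim0_of_Cderiv_0.
  - intros s Hs; unfold_system s Hs.
    eapply Cderiv_eq; [Cderiv_rules | field_system s].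
  - replace (RtoC 0) with (RtoC 0 + RtoC 0 + RtoC 0) by ring.
    repeat apply Clim0_add; apply HB_xy; simpl; auto.
Qed.

Lemma eta0_sub_xi2 : forall t, 0 < t -> eta0 t - xi2 t = nu0 + nu1 + nu2.
Proof.
  intros t Ht.
  replace (nu0 + nu1 + nu2) with (RtoC 0 - - (nu0 + nu1 + nu2)) by ring.
  revert t Ht; apply eq_Clim0_of_Cderiv_0.
  - intros s Hs; unfold_system s Hs.
    eapply Cderiv_eq; [Cderiv_rules|].
    rewrite Eeta0, Exi2; ring.
  - apply Clim0_sub; [apply HB_eta | apply HB_xi].
Qed.

Lemma e2_first_integral : forall t, 0 < t ->
  eta0 t - eta1 t + xi1 t - xi2 t * eta0 t + RtoC t * x0 t * y2 t
  = nu0 * nu1 + nu0 * nu2 + nu1 * nu2.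
Proof.
  intros t Ht.
  replace (nu0 * nu1 + nu0 * nu2 + nu1 * nu2) with
    (RtoC 0 - RtoC 0 + (nu0 * nu1 + nu0 * nu2 + nu1 * nu2)
     - - (nu0 + nu1 + nu2) * RtoC 0 + RtoC 0) by ring.
  revert t Ht; apply eq_Clim0_of_Cderiv_0.
  - intros s Hs; unfold_system s Hs.
    eapply Cderiv_eq; [Cderiv_rules|].
    rewrite Eeta0, Eeta1, Exi1, Exi2; field_system s.
  - repeat first [ apply (HB_xy x0 y2); simpl; auto
                  | apply HB_eta | apply HB_xi
                  | apply Clim0_sub | apply Clim0_add | apply Clim0_mul ].
Qed.

Lemma s_mul_d2eta0 : forall t, 0 < t ->
  RtoC t * d2eta0 t = (eta0 t * x0 t + x1 t) * y2 t + x0 t * (xi2 t * y2 t - y1 t).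
Proof.
  intros t Ht; unfold_system t Ht.
  assert (Hq : d2eta0 t = - (dx0 t * y2 t + x0 t * dy2 t)).
  { eapply Cderiv_unique; [exact D2eta0|].
    apply (Cderiv_ext_pos (fun s => - (x0 s * y2 s))); [exact Ht | |Cderiv_rules].
    intros s Hs; symmetry; apply Hsys, Hs. }
  rewrite Hq; field_system t.
Qed.

Lemma s_mul_d2eta0_deriv : forall t, 0 < t ->
  RtoC t * (d2eta0 t + RtoC t * d3eta0 t) =
    RtoC 2 * (eta0 t * x0 t + x1 t) * (y1 t - xi2 t * y2 t)
    - (eta0 t * (eta0 t * x0 t + x1 t) + eta1 t * x0 t + x2 t) * y2 t
    + x0 t * (xi2 t * (y1 t - xi2 t * y2 t) + xi1 t * y2 t - y0 t)
    - RtoC 2 * RtoC t * (x0 t * y2 t) * (x0 t * y2 t).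
Proof.
  intros t Ht; unfold_system t Ht.
  assert (Hr : d2eta0 t + RtoC t * d3eta0 t =
    (deta0 t * x0 t + eta0 t * dx0 t + dx1 t) * y2 t + (eta0 t * x0 t + x1 t) * dy2 t
    + dx0 t * (xi2 t * y2 t - y1 t) + x0 t * (dxi2 t * y2 t + xi2 t * dy2 t - dy1 t)).
  { eapply Cderiv_unique.
    - eapply Cderiv_eq; [eapply Cderiv_mul; [apply Cderiv_RtoC | exact D3eta0] | ring].
    - apply (Cderiv_ext_pos
        (fun s => (eta0 s * x0 s + x1 s) * y2 s + x0 s * (xi2 s * y2 s - y1 s)));
        [exact Ht | intros s Hs; symmetry; apply s_mul_d2eta0, Hs |].
      eapply Cderiv_eq; [Cderiv_rules | cbv beta; ring]. }
  rewrite Hr, Eeta0, Exi2; field_system t.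
Qed.

End M2_system.

Theorem mainTheorem8
  (nu0 nu1 nu2 : CC)
  (Hnu : forall k : Z, (nu2 - nu1)%CC <> RtoC (IZR k))
  (x0 x1 x2 y0 y1 y2 xi0 xi1 xi2 eta0 eta1 eta2 : R -> CC)
  (dx0 dx1 dx2 dy0 dy1 dy2 dxi0 dxi1 dxi2 deta0 deta1 deta2 : R -> CC)
  (d2eta0 d3eta0 : R -> CC)
  (Hder : forall s, 0 < s ->
     Cderiv x0 s (dx0 s) /\ Cderiv x1 s (dx1 s) /\ Cderiv x2 s (dx2 s) /\
     Cderiv y0 s (dy0 s) /\ Cderiv y1 s (dy1 s) /\ Cderiv y2 s (dy2 s) /\
     Cderiv xi0 s (dxi0 s) /\ Cderiv xi1 s (dxi1 s) /\ Cderiv xi2 s (dxi2 s) /\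
     Cderiv eta0 s (deta0 s) /\ Cderiv eta1 s (deta1 s) /\ Cderiv eta2 s (deta2 s) /\
     Cderiv deta0 s (d2eta0 s) /\ Cderiv d2eta0 s (d3eta0 s))
  (Hsys : forall s, 0 < s ->
     (RtoC s * dx0 s = - (eta0 s * x0 s) - x1 s)%CC /\
     (RtoC s * dx1 s = - (eta1 s * x0 s) - x2 s)%CC /\
     (RtoC s * dx2 s = - (eta2 s * x0 s) - RtoC s * x0 s
                       + xi0 s * x0 s + xi1 s * x1 s + xi2 s * x2 s)%CC /\
     (RtoC s * dy2 s = - (xi2 s * y2 s) + y1 s)%CC /\
     (RtoC s * dy1 s = - (xi1 s * y2 s) + y0 s)%CC /\
     (RtoC s * dy0 s = - (xi0 s * y2 s) + RtoC s * y2 s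
                       + eta0 s * y0 s + eta1 s * y1 s + eta2 s * y2 s)%CC /\
     (dxi0 s = - (x0 s * y0 s))%CC /\
     (dxi1 s = - (x0 s * y1 s))%CC /\
     (dxi2 s = - (x0 s * y2 s))%CC /\
     (deta0 s = - (x0 s * y2 s))%CC /\
     (deta1 s = - (x1 s * y2 s))%CC /\
     (deta2 s = - (x2 s * y2 s))%CC)
  (HB_eta : Clim0 eta0 (RtoC 0) /\ Clim0 eta1 (RtoC 0) /\ Clim0 eta2 (RtoC 0))
  (HB_xi : Clim0 xi0 (- (nu0 * nu1 * nu2))%CC /\
           Clim0 xi1 (nu0 * nu1 + nu0 * nu2 + nu1 * nu2)%CC /\
           Clim0 xi2 (- (nu0 + nu1 + nu2))%CC)
  (HB_xy : forall u v : R -> CC, In u (x0 :: x1 :: x2 :: nil) ->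
     In v (y0 :: y1 :: y2 :: nil) ->
     Clim0 (fun s => u s * v s)%CC (RtoC 0) /\
     Clim0 (fun s => RtoC s * u s * v s)%CC (RtoC 0))
  (Hnz : forall s, 0 < s -> deta0 s <> RtoC 0) :
  forall s, 0 < s ->
    let e1 := (nu0 + nu1 + nu2)%CC in
    let e2 := (nu0 * nu1 + nu0 * nu2 + nu1 * nu2)%CC in
    let F := (- (RtoC 3 * x0 s * y1 s) - RtoC 3 * x1 s * y2 s
              - e1 * x0 s * y2 s)%CC in
    let p := deta0 s in
    let q := d2eta0 s in
    let r := d3eta0 s in
    let S := RtoC s in
    (F * F =
       RtoC 4 * e1 * e1 * p * p - RtoC 12 * e2 * p * p
       + RtoC 12 * eta0 s * p * p - RtoC 36 * S * p * p * p
       + RtoC 9 * S * S * q * q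
       - RtoC 12 * S * p * (q + S * r))%CC.
Proof.
  intros s Hs; cbv zeta.
  apply F_squared_identity
    with (X2 := x2 s) (Y0 := y0 s) (Xi1 := xi1 s) (Xi2 := xi2 s) (Eta1 := eta1 s).
  - eapply x_dot_y_eq0; eassumption.
  - eapply eta0_sub_xi2; eassumption.
  - eapply e2_first_integral; eassumption.
  - apply Hsys, Hs.
  - eapply s_mul_d2eta0; eassumption.
  - eapply s_mul_d2eta0_deriv; eassumption.
Qed.
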